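(* For all $n,m,l\in\mathbb{N}_0$ with $l\le n$ and $l\le m$, and all $x,y\in[0,1]$, $$\frac{1}{\bigl([x]_q+[1-x]_q\bigr)^{n-l}\bigl([y]_q+[1-y]_q\bigr)^{m-l}}\sum_{k=l}^{n}\sum_{j=l}^{m}\frac{\binom{k}{l}\binom{j}{l}}{\binom{n}{l}\binom{m}{l}}B_{k,j;n,m}(x,y;q)$$ $$=\sum_{k=0}^{l}\sum_{j=0}^{l}q^{\binom{k}{2}+\binom{j}{2}}\binom{x}{k}_q\binom{y}{j}_q[k]_q!\,[j]_q!\,S(l,k;q)\,S(l,j;q).$$
   Context: Fix $q\in(0,1)$. For real $x$ put $[x]_q=\frac{1-q^x}{1-q}$. For $k,j,n,m\in\mathbb{Z}$ and $x,y\in[0,1]$, the modified $q$-Bernstein polynomial of two variables is $B_{k,j;n,m}(x,y;q)=\binom{n}{k}\binom{m}{j}[x]_q^k[y]_q^j[1-x]_q^{n-k}[1-y]_q^{m-j}$ if $0\le k\le n$ and $0\le j\le m$, and $B_{k,j;n,m}(x,y;q)=0$ otherwise. For $k\in\mathbb{N}_0$, $[k]_q!=[1]_q[2]_q\cdots[k]_q$ with $[0]_q!=1$. For real $x$ and $k\in\mathbb{N}_0$, $\binom{x}{k}_q=\frac{[x]_q[x-1]_q\cdots[x-k+1]_q}{[k]_q!}$ (equal to $1$ for $k=0$); for integers $0\le i\le k$, $\binom{k}{i}_q=\frac{[k]_q!}{[i]_q![k-i]_q!}$. The $q$-Stirling numbers of the second kind are $S(n,k;q)=\frac{q^{-\binom{k}{2}}}{[k]_q!}\sum_{i=0}^{k}(-1)^i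 q^{\binom{i}{2}}\binom{k}{i}_q[k-i]_q^{\,n}$ for $n,k\in\mathbb{N}_0$, with the convention $0^0=1$. *)

From Stdlib Require Import Reals Lra Lia Arith List.
Open Scope R_scope.

(* sum_{i=a}^{b} f i  (empty if b < a) *)
Definition rsum (a b : nat) (f : nat -> R) : R :=
  fold_right (fun i acc => f i + acc) 0 (List.seq a (S b - a)).

(* prod_{i=a}^{b} f i  (empty = 1 if b < a) *)
Definition rprod (a b : nat) (f : nat -> R) : R :=
  fold_right (fun i acc => f i * acc) 1 (List.seq a (S b - a)).

Definition qnum (q x : R) : R := (1 - Rpower q x) / (1 - q).

Definition qfact (q : R) (k : nat) : R := rprod 1 k (fun i => qnum q (INR i)).

Definition qbinR (q x : R) (k : nat) : R :=
  fold_right (fun i acc => qnum q (x - INR i) * acc) 1 (List.seq 0 k) / qfact q k.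

Definition qbin (q : R) (k i : nat) : R :=
  qfact q k / (qfact q i * qfact q (k - i)).

Definition bin2 (k : nat) : nat := (k * (k - 1) / 2)%nat.

(* q-Stirling numbers of the second kind; pow 0 0 = 1 in Stdlib *)
Definition qstir (q : R) (n k : nat) : R :=
  / q ^ (bin2 k) / qfact q k *
  rsum 0 k (fun i => (-1) ^ i * q ^ (bin2 i) * qbin q k i * (qnum q (INR (k - i))) ^ n).

Definition qBern (q : R) (k j n m : nat) (x y : R) : R :=
  if (Nat.leb k n && Nat.leb j m)%bool then
    C n k * C m j * qnum q x ^ k * qnum q y ^ j
      * qnum q (1 - x) ^ (n - k) * qnum q (1 - y) ^ (m - j)
  else 0.

(* Both sides split into a factor depending on x times the same factor in y, and
   each factor equals [x]^l (resp. [y]^l):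
   - Left side.  Since C(k,l) C(n,k) / C(n,l) = C(n-l,k-l), the binomial theorem
     gives  sum_{k=l}^n C(k,l)/C(n,l) C(n,k) a^k b^(n-k) = a^l (a+b)^(n-l),  and
     a + b = [x] + [1-x] is nonzero for x in [0,1], so the normalisation cancels.
   - Right side.  Let T(l,k) = q^C(k,2) [k]! S(l,k;q), i.e. the alternating sum in
     the definition of S(l,k;q).  The expansion  [x]^l = sum_k T(l,k) binom(x,k)_q
     follows by induction on l from the recurrence
     T(l+1,k+1) = [k+1] (T(l,k+1) + q^k T(l,k)), the recurrence
     [x] binom(x,k)_q = [k] binom(x,k)_q + q^k [k+1] binom(x,k+1)_q, and the
     vanishing T(l,k) = 0 for k > l, whose base case is the q-binomial theorem
     sum_i (-1)^i q^C(i,2) binom(k,i)_q = 0 for k >= 1. *)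

From Stdlib Require Import Reals Lra Lia Arith List.
Open Scope R_scope.

Lemma fold_sum_init (f : nat -> R) (s : list nat) (c : R) :
  fold_right (fun i acc => f i + acc) c s = fold_right (fun i acc => f i + acc) 0 s + c.
Proof. induction s as [|a s IH]; simpl; [ring | rewrite IH; ring]. Qed.

Lemma fold_prod_init (f : nat -> R) (s : list nat) (c : R) :
  fold_right (fun i acc => f i * acc) c s = fold_right (fun i acc => f i * acc) 1 s * c.
Proof. induction s as [|a s IH]; simpl; [ring | rewrite IH; ring]. Qed.

Lemma fold_right_map_nat (g : nat -> R -> R) (h : nat -> nat) (c : R) (s : list nat) :
  fold_right g c (map h s) = fold_right (fun i => g (h i)) c s.
Proof. induction s as [|a s IH]; simpl; [reflexivity | now rewrite IH]. Qed.

Lemma rsum_last a b f : (a <= S b)%nat -> rsum a (S b) f = rsum a b f + f (S b).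
Proof.
  intros Hab. unfold rsum.
  replace (S (S b) - a)%nat with (S (S b - a)) by lia. rewrite seq_S.
  replace (a + (S b - a))%nat with (S b) by lia. rewrite fold_right_app. simpl.
  rewrite fold_sum_init. ring.
Qed.

Lemma rsum_first a b f : (a <= b)%nat -> rsum a b f = f a + rsum (S a) b f.
Proof.
  intros Hab. unfold rsum. replace (S b - a)%nat with (S (b - a)) by lia.
  replace (S b - S a)%nat with (b - a)%nat by lia. reflexivity.
Qed.

Lemma rsum_shift1 a b f : rsum (S a) (S b) f = rsum a b (fun i => f (S i)).
Proof.
  unfold rsum. replace (S (S b) - S a)%nat with (S b - a)%nat by lia.
  rewrite <- seq_shift. now rewrite fold_right_map_nat.
Qed.

Lemma rsum_translate a N f : rsum a (a + N) f = rsum 0 N (fun i => f (a + i)%nat).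
Proof.
  revert f; induction a as [|a IH]; intros f; simpl; [reflexivity|].
  now rewrite rsum_shift1, IH.
Qed.

Lemma rsum_0_S b f : rsum 0 (S b) f = f 0%nat + rsum 0 b (fun i => f (S i)).
Proof. rewrite rsum_first by lia. now rewrite rsum_shift1. Qed.

Lemma rsum_ext a b f g :
  (forall i, (a <= i <= b)%nat -> f i = g i) -> rsum a b f = rsum a b g.
Proof.
  intros Hfg. unfold rsum.
  assert (Hin : forall i, In i (seq a (S b - a)) -> f i = g i)
    by (intros i Hi; apply in_seq in Hi; apply Hfg; lia).
  revert Hin. generalize (seq a (S b - a)). intros s Hs.
  induction s as [|i s IH]; simpl; [reflexivity|].
  rewrite Hs by (left; reflexivity). rewrite IH; [reflexivity|].
  intros; apply Hs; now right.
Qed.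

Lemma rsum_add a b f g : rsum a b (fun i => f i + g i) = rsum a b f + rsum a b g.
Proof.
  unfold rsum. generalize (seq a (S b - a)).
  intros s; induction s as [|i s IH]; simpl; [ring | rewrite IH; ring].
Qed.

Lemma rsum_scal a b c f : rsum a b (fun i => c * f i) = c * rsum a b f.
Proof.
  unfold rsum. generalize (seq a (S b - a)).
  intros s; induction s as [|i s IH]; simpl; [ring | rewrite IH; ring].
Qed.

Lemma rsum_opp a b f : rsum a b (fun i => - f i) = - rsum a b f.
Proof.
  rewrite <- (Rmult_1_l (rsum a b f)), Ropp_mult_distr_l, <- rsum_scal.
  apply rsum_ext; intros; ring.
Qed.

Lemma rsum_prod a b c d f g :
  rsum a b f * rsum c d g = rsum a b (fun k => rsum c d (fun j => f k * g j)).
Proof.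
  rewrite Rmult_comm, <- (rsum_scal a b (rsum c d g) f). apply rsum_ext. intros i _.
  rewrite Rmult_comm, <- rsum_scal. apply rsum_ext. intros; ring.
Qed.

Lemma rsum_sum_f_R0 n f : rsum 0 n f = sum_f_R0 f n.
Proof.
  induction n as [|n IH]; [unfold rsum; simpl; ring|].
  rewrite rsum_last by lia. simpl. now rewrite IH.
Qed.

(** * q-integers, q-factorials and Gaussian binomial coefficients *)

Definition qint (q : R) (i : nat) : R := qnum q (INR i).

Lemma bin2_S i : bin2 (S i) = (bin2 i + i)%nat.
Proof.
  unfold bin2. replace (S i * (S i - 1))%nat with (i * (i - 1) + i * 2)%nat.
  - apply Nat.div_add; lia.
  - destruct i; [reflexivity|]. replace (S i - 1)%nat with i by lia.
    replace (S (S i) - 1)%nat with (S i) by lia. nia.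
Qed.

Definition qsign (q : R) (i : nat) : R := (-1) ^ i * q ^ (bin2 i).

Lemma qsign_S q i : qsign q (S i) = - q ^ i * qsign q i.
Proof. unfold qsign. rewrite bin2_S, pow_add. simpl. ring. Qed.

Lemma qfact_0 q : qfact q 0 = 1.
Proof. reflexivity. Qed.

Lemma qfact_S q k : qfact q (S k) = qfact q k * qint q (S k).
Proof.
  unfold qfact, rprod. replace (S (S k) - 1)%nat with (S (S k - 1)) by lia.
  rewrite seq_S. replace (1 + (S k - 1))%nat with (S k) by lia.
  rewrite fold_right_app. cbn [fold_right]. rewrite fold_prod_init. unfold qint. ring.
Qed.

(* Gaussian binomial coefficient extended by zero above the diagonal, so that
   Pascal's rule holds without side conditions on the upper index. *)
Definition qbin_ext (q : R) (k i : nat) : R := if Nat.leb i k then qbin q k i else 0.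

Section QIntegers.

Variable q : R.
Hypothesis hq0 : 0 < q.
Hypothesis hq1 : q < 1.

Lemma qint_pow i : qint q i = (1 - q ^ i) / (1 - q).
Proof. unfold qint, qnum. now rewrite Rpower_pow. Qed.

Lemma qint_0 : qint q 0 = 0.
Proof. rewrite qint_pow. simpl. unfold Rdiv. ring. Qed.

Lemma qint_S_pos k : 0 < qint q (S k).
Proof.
  rewrite qint_pow.
  destruct (pow_lt_1_compat q (S k)) as [_ Hlt]; [lra | lia |].
  apply Rdiv_lt_0_compat; lra.
Qed.

Lemma qint_add a b : qint q (a + b) = qint q a + q ^ a * qint q b.
Proof. rewrite !qint_pow, pow_add. field. lra. Qed.

Lemma qfact_pos k : 0 < qfact q k.
Proof.
  induction k as [|k IH]; [unfold qfact, rprod; simpl; lra|].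
  rewrite qfact_S. apply Rmult_lt_0_compat; [exact IH | apply qint_S_pos].
Qed.

Lemma qbin_0 k : qbin q k 0 = 1.
Proof.
  unfold qbin. rewrite qfact_0, Nat.sub_0_r.
  pose proof (qfact_pos k). field. lra.
Qed.

Lemma qbin_diag k : qbin q k k = 1.
Proof.
  unfold qbin. rewrite Nat.sub_diag, qfact_0.
  pose proof (qfact_pos k). field. lra.
Qed.

Lemma qbin_absorb k i : (i <= k)%nat ->
  qbin q (S k) (S i) * qint q (S i) = qint q (S k) * qbin q k i.
Proof.
  intros Hik. unfold qbin. replace (S k - S i)%nat with (k - i)%nat by lia.
  rewrite !qfact_S.
  pose proof (qfact_pos k). pose proof (qfact_pos i). pose proof (qfact_pos (k - i)).
  pose proof (qint_S_pos i).
  field. repeat split; lra.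
Qed.

(* q-Pascal rule  binom(k+1,i+1) = binom(k,i) + q^(i+1) binom(k,i+1)  for i < k,
   from [k+1] = [i+1] + q^(i+1) [k-i]. *)
Lemma qbin_pascal k i : (i < k)%nat ->
  qbin q (S k) (S i) = qbin q k i + q ^ (S i) * qbin q k (S i).
Proof.
  intros Hik. destruct (Nat.le_exists_sub (S i) k) as [m [-> _]]; [lia|].
  unfold qbin. replace (S (m + S i) - S i)%nat with (S m) by lia.
  replace (m + S i - i)%nat with (S m) by lia.
  replace (m + S i - S i)%nat with m by lia.
  rewrite !qfact_S.
  replace (S (m + S i)) with (S i + S m)%nat by lia. rewrite qint_add.
  replace (m + S i)%nat with (i + S m)%nat by lia.
  pose proof (qfact_pos (i + S m)). pose proof (qfact_pos i). pose proof (qfact_pos m).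
  pose proof (qint_S_pos i). pose proof (qint_S_pos m).
  field. repeat split; lra.
Qed.

Lemma qbin_ext_pascal k i : (i <= k)%nat ->
  qbin_ext q (S k) (S i) = qbin_ext q k i + q ^ (S i) * qbin_ext q k (S i).
Proof.
  intros Hik. unfold qbin_ext.
  replace (Nat.leb (S i) (S k)) with true by (symmetry; apply Nat.leb_le; lia).
  replace (Nat.leb i k) with true by (symmetry; apply Nat.leb_le; lia).
  destruct (Nat.eq_dec i k) as [->|Hne].
  - replace (Nat.leb (S k) k) with false by (symmetry; apply Nat.leb_gt; lia).
    rewrite !qbin_diag. ring.
  - replace (Nat.leb (S i) k) with true by (symmetry; apply Nat.leb_le; lia).
    apply qbin_pascal; lia.
Qed.

(** * The q-binomial theorem *)

(* The Gauss polynomial  sum_i (-1)^i q^C(i,2) binom(k,i)_q t^i,  which equals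
   (1-t)(1-qt)...(1-q^(k-1)t). *)
Definition gauss_alt (k : nat) (t : R) : R :=
  rsum 0 k (fun i => qsign q i * qbin_ext q k i * t ^ i).

Lemma gauss_alt_S k t : gauss_alt (S k) t = (1 - t) * gauss_alt k (q * t).
Proof.
  unfold gauss_alt. rewrite rsum_0_S.
  rewrite (rsum_ext 0 k _ (fun i => - t * (qsign q i * qbin_ext q k i * (q * t) ^ i)
     + qsign q (S i) * qbin_ext q k (S i) * (q * t) ^ (S i))).
  2:{ intros i Hi. rewrite qbin_ext_pascal by lia. rewrite qsign_S.
      simpl. rewrite !Rpow_mult_distr. ring. }
  rewrite rsum_add, rsum_scal.
  set (g := fun i => qsign q i * qbin_ext q k i * (q * t) ^ i).
  change (rsum 0 k (fun i => qsign q (S i) * qbin_ext q k (S i) * (q * t) ^ S i))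
    with (rsum 0 k (fun i => g (S i))).
  assert (Hsplit : rsum 0 (S k) g = rsum 0 k g + g (S k)) by (apply rsum_last; lia).
  rewrite rsum_0_S in Hsplit.
  assert (Htop : g (S k) = 0).
  { unfold g, qbin_ext. replace (Nat.leb (S k) k) with false
      by (symmetry; apply Nat.leb_gt; lia). ring. }
  assert (Hg0 : g 0%nat = 1) by (unfold g, qbin_ext, qsign; simpl; rewrite qbin_0; ring).
  assert (Hhead : qsign q 0 * qbin_ext q (S k) 0 * t ^ 0 = 1)
    by (unfold qbin_ext, qsign; simpl; rewrite qbin_0; ring).
  fold g. lra.
Qed.

Lemma gauss_alt_at_1 k : gauss_alt (S k) 1 = 0.
Proof. rewrite gauss_alt_S. ring. Qed.

(** * The numbers T(l,k) = q^C(k,2) [k]! S(l,k;q) *)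

Definition qstir_sum (l k : nat) : R :=
  rsum 0 k (fun i => (-1) ^ i * q ^ (bin2 i) * qbin q k i * (qnum q (INR (k - i))) ^ l).

(* Each summand of T(l+1,k+1) splits along [k+1-i] = [k+1] - q^(k+1-i) [i]; the
   second part is reindexed by absorption. *)
Lemma qstir_sum_S l k :
  qstir_sum (S l) (S k) = qint q (S k) * (qstir_sum l (S k) + q ^ k * qstir_sum l k).
Proof.
  unfold qstir_sum.
  set (u := fun i => qsign q i * qbin q (S k) i * qint q (S k - i) ^ l
                     * q ^ (S k - i) * qint q i).
  transitivity (qint q (S k) * rsum 0 (S k)
     (fun i => (-1) ^ i * q ^ bin2 i * qbin q (S k) i * qnum q (INR (S k - i)) ^ l)
     - rsum 0 (S k) u).
  { unfold Rminus. rewrite <- rsum_scal, <- rsum_opp, <- rsum_add.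
    apply rsum_ext. intros i Hi.
    assert (Hsplit : qint q (S k) = qint q (S k - i) + q ^ (S k - i) * qint q i)
      by (rewrite <- qint_add; f_equal; lia).
    change (qnum q (INR (S k - i)) ^ S l)
      with (qint q (S k - i) * qint q (S k - i) ^ l).
    unfold u, qsign, qint in *. rewrite Hsplit. ring. }
  assert (Hu : rsum 0 (S k) u = - (q ^ k) * rsum 0 k
     (fun i => (-1) ^ i * q ^ bin2 i * qbin q k i * qnum q (INR (k - i)) ^ l)
     * qint q (S k)).
  { rewrite rsum_0_S. unfold u at 1. rewrite qint_0, Rmult_0_r, Rplus_0_l.
    rewrite Rmult_comm, <- !rsum_scal. apply rsum_ext. intros i Hi.
    unfold u. simpl (S k - S i)%nat. rewrite qsign_S.
    replace (- q ^ i * qsign q i * qbin q (S k) (S i) * qint q (k - i) ^ l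
               * q ^ (k - i) * qint q (S i))
      with (- (q ^ i * q ^ (k - i)) * (qsign q i * (qbin q (S k) (S i) * qint q (S i))
              * qint q (k - i) ^ l)) by ring.
    rewrite qbin_absorb by lia. rewrite <- pow_add.
    replace (i + (k - i))%nat with k by lia. unfold qsign, qint. ring. }
  rewrite Hu. ring.
Qed.

Lemma qstir_sum_0_S k : qstir_sum 0 (S k) = 0.
Proof.
  rewrite <- (gauss_alt_at_1 k). unfold qstir_sum, gauss_alt. apply rsum_ext.
  intros i Hi. unfold qbin_ext, qsign.
  replace (Nat.leb i (S k)) with true by (symmetry; apply Nat.leb_le; lia).
  rewrite pow1. simpl. ring.
Qed.

Lemma qstir_sum_vanish l k : (l < k)%nat -> qstir_sum l k = 0.
Proof.
  revert k. induction l as [|l IH]; intros k Hlk; destruct k as [|k]; try lia.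
  - apply qstir_sum_0_S.
  - rewrite qstir_sum_S, !IH by lia. ring.
Qed.

Lemma qstir_sum_S_0 l : qstir_sum (S l) 0 = 0.
Proof.
  unfold qstir_sum, rsum. simpl.
  replace (qnum q 0) with 0 by (unfold qnum; rewrite Rpower_O by exact hq0; field; lra).
  ring.
Qed.

(** * Expansion of [x]^l in the q-binomials binom(x,k)_q *)

Definition qfalling (x : R) (k : nat) : R :=
  fold_right (fun i acc => qnum q (x - INR i) * acc) 1 (List.seq 0 k).

Lemma qfalling_S x k : qfalling x (S k) = qfalling x k * qnum q (x - INR k).
Proof.
  unfold qfalling. rewrite seq_S, fold_right_app. cbn [fold_right].
  rewrite fold_prod_init. simpl. ring.
Qed.

(* [x] binom(x,k) = [k] binom(x,k) + q^k [k+1] binom(x,k+1),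
   from [x] = [k] + q^k [x-k]. *)
Lemma qbinR_mul_qnum x k :
  qnum q x * qbinR q x k
  = qint q k * qbinR q x k + q ^ k * qint q (S k) * qbinR q x (S k).
Proof.
  unfold qbinR. fold (qfalling x k). fold (qfalling x (S k)).
  rewrite qfalling_S, qfact_S.
  pose proof (qfact_pos k). pose proof (qint_S_pos k).
  assert (Hsplit : qnum q x = qint q k + q ^ k * qnum q (x - INR k)).
  { rewrite qint_pow. unfold qnum. rewrite <- (Rpower_pow k q) by exact hq0.
    replace x with (INR k + (x - INR k)) at 1 by ring. rewrite Rpower_plus.
    field. lra. }
  rewrite Hsplit. field. lra.
Qed.

Lemma qpow_expansion x l :
  rsum 0 l (fun k => qstir_sum l k * qbinR q x k) = qnum q x ^ l.
Proof.
  induction l as [|l IH].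
  { unfold rsum. simpl. unfold qstir_sum, rsum, qbinR, bin2. simpl.
    rewrite qbin_0, qfact_0. field. }
  set (h := fun k => qint q k * qstir_sum l k * qbinR q x k).
  set (v := fun k => qstir_sum l k * (q ^ k * qint q (S k) * qbinR q x (S k))).
  (* [x] times the expansion of [x]^l, regrouped with the binom(x,k) recurrence *)
  assert (Hrhs : qnum q x ^ S l = rsum 0 l h + rsum 0 l v).
  { simpl (qnum q x ^ S l). rewrite <- IH, <- rsum_scal, <- rsum_add.
    apply rsum_ext. intros i _. unfold h, v.
    replace (qnum q x * (qstir_sum l i * qbinR q x i))
      with (qstir_sum l i * (qnum q x * qbinR q x i)) by ring.
    rewrite qbinR_mul_qnum. ring. }
  (* the expansion at level l+1, unfolded with the recurrence for T *)
  assert (Hlhs : rsum 0 (S l) (fun k => qstir_sum (S l) k * qbinR q x k)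
                 = rsum 0 l (fun k => h (S k)) + rsum 0 l v).
  { rewrite rsum_0_S, qstir_sum_S_0, Rmult_0_l, Rplus_0_l, <- rsum_add.
    apply rsum_ext. intros i _. unfold h, v. rewrite qstir_sum_S. ring. }
  assert (Hshift : rsum 0 l h = rsum 0 l (fun k => h (S k))).
  { assert (Hlast : rsum 0 (S l) h = rsum 0 l h + h (S l)) by (apply rsum_last; lia).
    rewrite rsum_0_S in Hlast.
    assert (h (S l) = 0) by (unfold h; rewrite qstir_sum_vanish by lia; ring).
    assert (h 0%nat = 0) by (unfold h; rewrite qint_0; ring).
    lra. }
  rewrite Hlhs, Hrhs, Hshift. reflexivity.
Qed.

Lemma qstirling_expansion x l :
  rsum 0 l (fun k => q ^ bin2 k * qbinR q x k * qfact q k * qstir q l k) = qnum q x ^ l.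
Proof.
  rewrite <- qpow_expansion. apply rsum_ext. intros k _.
  unfold qstir. fold (qstir_sum l k).
  pose proof (qfact_pos k).
  assert (q ^ bin2 k <> 0) by (apply pow_nonzero; lra).
  field. split; lra.
Qed.

Lemma Rpower_le_1 z : 0 <= z -> Rpower q z <= 1.
Proof.
  intros Hz. unfold Rpower. rewrite <- exp_0.
  destruct (Rle_lt_or_eq_dec 0 z Hz) as [Hlt | <-].
  - left. apply exp_increasing.
    assert (ln q < 0) by (rewrite <- ln_1; apply ln_increasing; lra). nra.
  - right. f_equal. ring.
Qed.

(* [x] + [1-x] > 0 on [0,1]: both terms are nonnegative, and they cannot both vanish
   since q^x q^(1-x) = q < 1. *)
Lemma qnum_sum_nonzero x : 0 <= x -> x <= 1 -> qnum q x + qnum q (1 - x) <> 0.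
Proof.
  intros Hx0 Hx1. unfold qnum.
  pose proof (Rpower_le_1 x Hx0). pose proof (Rpower_le_1 (1 - x) ltac:(lra)).
  assert (Rpower q x * Rpower q (1 - x) = q).
  { rewrite <- Rpower_plus. replace (x + (1 - x)) with 1 by ring. now apply Rpower_1. }
  assert (0 < Rpower q x) by apply exp_pos.
  assert (0 < Rpower q (1 - x)) by apply exp_pos.
  intro Hzero.
  assert (1 - Rpower q x + (1 - Rpower q (1 - x)) = 0).
  { replace (1 - Rpower q x + (1 - Rpower q (1 - x))) with
      (((1 - Rpower q x) / (1 - q) + (1 - Rpower q (1 - x)) / (1 - q)) * (1 - q))
      by (field; lra).
    rewrite Hzero. ring. }
  nra.
Qed.

End QIntegers.

Lemma C_pos n k : 0 < C n k.
Proof.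
  unfold C. apply Rdiv_lt_0_compat; [apply INR_fact_lt_0|].
  apply Rmult_lt_0_compat; apply INR_fact_lt_0.
Qed.

(* l-th factorial moment of a binomial-type distribution:
   sum_{k=l}^n C(k,l)/C(n,l) C(n,k) a^k b^(n-k) = a^l (a+b)^(n-l),
   using C(k,l) C(n,k) / C(n,l) = C(n-l,k-l) and the binomial theorem. *)
Lemma binomial_moment l n a b : (l <= n)%nat ->
  rsum l n (fun k => C k l / C n l * (C n k * a ^ k * b ^ (n - k)))
  = a ^ l * (a + b) ^ (n - l).
Proof.
  intros Hln. remember (n - l)%nat as N. assert (n = l + N)%nat by lia. subst n.
  rewrite rsum_translate, binomial, <- rsum_sum_f_R0, <- rsum_scal.
  apply rsum_ext. intros i _.
  rewrite pow_add. unfold C.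
  replace (l + i - l)%nat with i by lia. replace (l + N - l)%nat with N by lia.
  replace (l + N - (l + i))%nat with (N - i)%nat by lia.
  pose proof (INR_fact_neq_0 l). pose proof (INR_fact_neq_0 i).
  pose proof (INR_fact_neq_0 N). pose proof (INR_fact_neq_0 (N - i)).
  pose proof (INR_fact_neq_0 (l + i)). pose proof (INR_fact_neq_0 (l + N)).
  field. repeat split; assumption.
Qed.

Theorem theorem11 (q : R) (hq0 : 0 < q) (hq1 : q < 1)
  (n m l : nat) (hln : (l <= n)%nat) (hlm : (l <= m)%nat)
  (x y : R) (hx0 : 0 <= x) (hx1 : x <= 1) (hy0 : 0 <= y) (hy1 : y <= 1) :
  / ((qnum q x + qnum q (1 - x)) ^ (n - l) * (qnum q y + qnum q (1 - y)) ^ (m - l))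
  * rsum l n (fun k => rsum l m (fun j =>
      C k l * C j l / (C n l * C m l) * qBern q k j n m x y))
  = rsum 0 l (fun k => rsum 0 l (fun j =>
      q ^ (bin2 k + bin2 j) * qbinR q x k * qbinR q y j
      * qfact q k * qfact q j * qstir q l k * qstir q l j)).
Proof.
  (* the right side is the product of the x- and y-expansions of [x]^l and [y]^l *)
  rewrite (rsum_ext 0 l _ (fun k => rsum 0 l (fun j =>
      (q ^ bin2 k * qbinR q x k * qfact q k * qstir q l k) *
      (q ^ bin2 j * qbinR q y j * qfact q j * qstir q l j)))).
  2:{ intros k _. apply rsum_ext. intros j _. rewrite pow_add. ring. }
  rewrite <- rsum_prod, !qstirling_expansion by assumption.
  set (a := qnum q x). set (b := qnum q (1 - x)).
  set (c := qnum q y). set (d := qnum q (1 - y)).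
  (* the left sum is the product of two binomial moments *)
  rewrite (rsum_ext l n _ (fun k => rsum l m (fun j =>
      (C k l / C n l * (C n k * a ^ k * b ^ (n - k)))
      * (C j l / C m l * (C m j * c ^ j * d ^ (m - j)))))).
  2:{ intros k Hk. apply rsum_ext. intros j Hj. unfold qBern.
      replace (Nat.leb k n) with true by (symmetry; apply Nat.leb_le; lia).
      replace (Nat.leb j m) with true by (symmetry; apply Nat.leb_le; lia). simpl.
      pose proof (C_pos n l). pose proof (C_pos m l).
      unfold a, b, c, d. field. split; lra. }
  rewrite <- rsum_prod, !binomial_moment by assumption.
  assert ((a + b) ^ (n - l) <> 0) by (apply pow_nonzero, qnum_sum_nonzero; assumption).
  assert ((c + d) ^ (m - l) <> 0) by (apply pow_nonzero, qnum_sum_nonzero; assumption).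
  field. split; assumption.
Qed.
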